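(* Let $(E,\mathscr{T},\le)$ be a $T_2$-preordered Tychonoff space, let $\mathcal{F}$ be the family of continuous isotone functions $f:E\to[0,1]$, and assume $G(\le)=\bigcap_{f\in\mathcal{F}}G_f$. Let $\beta:E\to\beta E$ be the Stone–Čech compactification, and let $\tilde{\mathcal{F}}$ be the set of continuous functions $\tilde f:\beta E\to[0,1]$ which are the unique continuous extensions of $f\circ\beta^{-1}:\beta(E)\to[0,1]$, $f\in\mathcal{F}$. Define the relation $\le_\beta$ on $\beta E$ by $G(\le_\beta)=\bigcap_{\tilde f\in\tilde{\mathcal{F}}}G_{\tilde f}$. Then $(\beta E,\mathscr{T}_\beta,\le_\beta)$ (with $\mathscr{T}_\beta$ the Stone–Čech topology) is a Hausdorff $T_2$-preorder compactification of $(E,\mathscr{T},\le)$ via $\beta$, and it is the largest Hausdorff $T_2$-preorder compactification, i.e. it dominates every Hausdorff $T_2$-preorder compactification of $E$. Moreover, every continuous isotone function $f:E\to[0,1]$ extends to a continuous isotone function on $(\beta E,\le_\beta)$.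
   Context: A topological preordered space is a triple $(E,\mathscr{T},\le)$, $\le$ a preorder; it is $T_2$-preordered if $G(\le)=\{(x,y):x\le y\}$ is closed in $E\times E$. Isotone: $x\le y\Rightarrow f(x)\le f(y)$. For $f:X\to[0,1]$, $G_f=\{(x,y):f(x)\le f(y)\}$. A preorder embedding is an injective continuous isotone map which is a homeomorphism onto its image and whose inverse on the image (with induced preorder) is isotone. A preorder compactification of $E$ is a preorder embedding $c:E\to cE$ into a compact topological preordered space $(cE,\mathscr{T}_c,\le_c)$ with $c(E)$ dense; it is a Hausdorff $T_2$-preorder compactification if moreover $cE$ is Hausdorff and $\le_c$ has closed graph. For preorder compactifications, $c_1\le c_2$ ($c_2$ dominates $c_1$) means there is a continuous isotone $C:c_2E\to c_1E$ with $C\circ c_2=c_1$. *)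

From HB Require Import structures.
From mathcomp Require Import all_boot all_order all_algebra.
From mathcomp Require Import all_classical all_reals all_analysis.
Set Implicit Arguments. Unset Strict Implicit. Unset Printing Implicit Defensive.
Import Order.TTheory GRing.Theory Num.Theory numFieldNormedType.Exports.
Local Open Scope classical_set_scope.
Local Open Scope ring_scope.

Section Defs.
Context (R : realType).

Definition is_preorder (T : Type) (le : T -> T -> Prop) :=
  (forall x, le x x) /\ (forall x y z, le x y -> le y z -> le x z).

Definition graph (T : Type) (le : T -> T -> Prop) : set (T * T) :=
  [set xy | le xy.1 xy.2].

Definition T2_preordered (T : topologicalType) (le : T -> T -> Prop) :=
  is_preorder le /\ closed (graph le).

Definition isotone (T U : Type) (leT : T -> T -> Prop) (leU : U -> U -> Prop)
  (f : T -> U) := forall x y, leT x y -> leU (f x) (f y).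

Definition completely_regular (T : topologicalType) :=
  forall (x : T) (B : set T), closed B -> ~ B x ->
    exists f : T -> R, [/\ continuous f, (forall y, 0 <= f y <= 1),
                           f x = 0 & forall y, B y -> f y = 1].

Definition tychonoff_space (T : topologicalType) :=
  completely_regular T /\ hausdorff_space T.

Definition cont01 (T : topologicalType) (f : T -> R) :=
  continuous f /\ (forall x, 0 <= f x <= 1).

Definition cont_isotone01 (T : topologicalType) (le : T -> T -> Prop)
  (f : T -> R) := cont01 f /\ isotone le (fun a b : R => a <= b) f.

Definition topological_embedding (T U : topologicalType) (c : T -> U) :=
  [/\ injective c, continuous c &
      forall A : set T, open A -> exists B : set U, open B /\ c @` A = range c `&` B].

Definition preorder_embedding (T U : topologicalType)
  (leT : T -> T -> Prop) (leU : U -> U -> Prop) (c : T -> U) :=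
  [/\ topological_embedding c, isotone leT leU c &
      forall x y, leU (c x) (c y) -> leT x y].

Definition preorder_compactification (T U : topologicalType)
  (leT : T -> T -> Prop) (leU : U -> U -> Prop) (c : T -> U) :=
  [/\ is_preorder leU, compact [set: U], preorder_embedding leT leU c
    & dense (range c)].

Definition hausdorff_T2_preorder_compactification (T U : topologicalType)
  (leT : T -> T -> Prop) (leU : U -> U -> Prop) (c : T -> U) :=
  [/\ preorder_compactification leT leU c, hausdorff_space U
    & closed (graph leU)].

Definition dominates (T U1 U2 : topologicalType)
  (le1 : U1 -> U1 -> Prop) (le2 : U2 -> U2 -> Prop)
  (c1 : T -> U1) (c2 : T -> U2) :=
  exists C : U2 -> U1, [/\ continuous C, isotone le2 le1 C &
                          forall x, C (c2 x) = c1 x].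

(** Stone–Cech compactification of E, given by its universal property:
    a compact Hausdorff space with a dense topological embedding
    beta : E -> bE such that every continuous E -> [0,1] extends
    continuously to bE -> [0,1]. *)
Definition stone_cech (T U : topologicalType) (beta : T -> U) :=
  [/\ compact [set: U], hausdorff_space U, topological_embedding beta,
      dense (range beta) &
      forall f : T -> R, cont01 f ->
        exists g : U -> R, cont01 g /\ forall x, g (beta x) = f x].

Definition le_beta (T U : topologicalType) (le : T -> T -> Prop)
  (beta : T -> U) (p q : U) :=
  forall f : T -> R, cont_isotone01 le f ->
  forall g : U -> R, continuous g -> (forall x, g (beta x) = f x) -> g p <= g q.

End Defs.

From HB Require Import structures.
From mathcomp Require Import all_boot all_order all_algebra.
From mathcomp Require Import all_classical all_reals all_analysis lra.
Import Order.TTheory GRing.Theory Num.Theory numFieldNormedType.Exports.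
Local Open Scope classical_set_scope.
Local Open Scope ring_scope.
Set Implicit Arguments. Unset Strict Implicit. Unset Printing Implicit Defensive.

(* Everything rests on Nachbin's ordered Urysohn lemma: in a compact Hausdorff
   space whose preorder has a closed graph, a closed upper set and a disjoint
   closed lower set are separated by a continuous isotone map into [0,1].  It is
   obtained as in Urysohn's lemma, from a dyadic chain of open lower sets
   interleaved with closed lower ones, by counting the members of the chain that
   miss a point.

   The definition of [<=_beta] as an intersection of graphs of continuous maps
   makes it a closed preorder for which [beta] is isotone, and the hypothesis
   [G(<=) = \bigcap_f G_f] makes [beta] reflect it.  Given a Hausdorff
   T2-preorder compactification [c : E -> cE], the Stone-Cech property lifts
   [c] to a continuous [C : bE -> cE]; for every Nachbin function [h] on [cE],
   [h \o c] belongs to [F] and its extension to [bE] is [h \o C], which forces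
   [C] to be isotone. *)

Definition upper_set (T : Type) (le : T -> T -> Prop) (S : set T) :=
  forall x y, le x y -> S x -> S y.

Definition lower_set (T : Type) (le : T -> T -> Prop) (S : set T) :=
  forall x y, le x y -> S y -> S x.

Lemma lower_setC (T : Type) (le : T -> T -> Prop) (S : set T) :
  upper_set le S -> lower_set le (~` S).
Proof. by move=> upS x y xy nSy Sx; apply: nSy; exact: upS Sx. Qed.

Lemma closed_graph_converse (X : topologicalType) (le : X -> X -> Prop) :
  closed (graph le) -> closed (graph (fun x y => le y x)).
Proof.
move=> cG; have -> : graph (fun x y => le y x) = unstable.swap @^-1` graph le.
  by apply/seteqP; split=> -[].
by apply: preimage_closed => // p _; exact: swap_continuous.
Qed.

Lemma closed_upper_principal (X : topologicalType) (le : X -> X -> Prop) a :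
  closed (graph le) -> closed [set y | le a y].
Proof.
move=> cG; have -> : [set y | le a y] = pair a @^-1` graph le by [].
apply: preimage_closed => // y _.
by apply: cvg_pair; [exact: cvg_cst | exact: cvg_id].
Qed.

Lemma closed_lower_principal (X : topologicalType) (le : X -> X -> Prop) a :
  closed (graph le) -> closed [set y | le y a].
Proof. by move/closed_graph_converse; exact: closed_upper_principal. Qed.

(* For [y] in the closure, the sets [K `&` (lower hull of V)], [V] a neighbourhood
   of [y], form a proper filter on the compact set [K]; any cluster point [k0]
   of it has [(k0, y)] in the closure of the graph. *)
Lemma closed_upper_hull (X : topologicalType) (le : X -> X -> Prop) (K : set X) :
  compact [set: X] -> closed (graph le) -> closed K ->
  closed [set y | exists2 k, K k & le k y].
Proof.
move=> cX cG cK y cly.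
pose B (V : set X) := K `&` [set k | exists2 v, V v & le k v].
have FB : Filter (filter_from (nbhs y) B).
  apply: filter_from_filter; first by exists setT; exact: filterT.
  move=> P Q nP nQ; exists (P `&` Q); first exact: filterI.
  by move=> k [Kk [v [Pv Qv] kv]]; split; split=> //; exists v.
have PFB : ProperFilter (filter_from (nbhs y) B).
  apply: filter_from_proper => // V nV.
  by have [v [[k Kk kv] Vv]] := cly V nV; exists k; split=> //; exists v.
have FK : filter_from (nbhs y) B K by exists setT; [exact: filterT | move=> k []].
have cptK : compact K := subclosed_compact cK cX (fun _ _ => I).
have [k0 [Kk0 clk0]] := cptK _ PFB FK.
exists k0 => //; apply: (cG (k0, y)) => W [[U V] /= [nU nV] UVW].
have [k [[Kk [v Vv kv]] Uk]] := clk0 (B V) U (ex_intro2 _ _ V nV (fun _ h => h)) nU.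
by exists (k, v); split=> //; exact: UVW.
Qed.

Lemma closed_lower_hull (X : topologicalType) (le : X -> X -> Prop) (K : set X) :
  compact [set: X] -> closed (graph le) -> closed K ->
  closed [set y | exists2 k, K k & le y k].
Proof. by move=> cX /closed_graph_converse; exact: closed_upper_hull. Qed.

Section ordered_compact.
Variables (X : topologicalType) (le : X -> X -> Prop).
Hypotheses (cX : compact [set: X]) (hX : hausdorff_space X).
Hypotheses (preX : is_preorder le) (cG : closed (graph le)).

Definition interpolates (K W V L : set X) :=
  [/\ open V, closed L, lower_set le V, lower_set le L &
      [/\ K `<=` V, V `<=` L & L `<=` W]].

(* By normality, [K <= Q <= closure Q <= W] for some open [Q]; then take for
   [V] the complement of the upper hull of [~` Q] and for [L] the lower hull
   of [closure Q]. *)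
Lemma lower_interpolation (K W : set X) :
  closed K -> open W -> lower_set le K -> lower_set le W -> K `<=` W ->
  exists VL : set X * set X, interpolates K W VL.1 VL.2.
Proof.
move=> cK oW loK loW KW; have [lerefl letrans] := preX.
have nbhsW : set_nbhs K W by apply/set_nbhsP; exists W; split.
have [P nbhsP clPW] := compact_normal hX cX cK nbhsW.
have [Q [oQ KQ QP]] := (set_nbhsP K P).1 nbhsP.
have clQW : closure Q `<=` W := subset_trans (closureS QP) clPW.
exists (~` [set y | exists2 z, (~` Q) z & le z y],
        [set y | exists2 z, closure Q z & le y z]).
split=> /=.
- by apply/closed_openC/closed_upper_hull => //; exact: open_closedC.
- by apply: closed_lower_hull => //; exact: closed_closure.
- by move=> x y xy nUy [z nQz zx]; apply: nUy; exists z => //; exact: letrans xy.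
- by move=> x y xy [z Qz yz]; exists z => //; exact: letrans yz.
split.
- by move=> x Kx [z nQz zx]; apply: nQz; apply/KQ/(loK _ _ zx).
- move=> x nUx; exists x; last exact: lerefl.
  by apply: subset_closure; apply: contrapT => nQx; apply: nUx; exists x.
- by move=> x [z Qz xz]; apply: (loW _ _ xz); exact: clQW.
Qed.

End ordered_compact.

Lemma indic_le (R : numDomainType) (T : Type) (S S' : set T) x y :
  (S x -> S' y) -> \1_S x <= \1_S' y :> R.
Proof.
rewrite !indicE; case: (boolP (x \in S)) => [/set_mem Sx /(_ Sx) S'y|_ _].
  by rewrite mem_set.
by rewrite ler0n.
Qed.

Lemma indic01 (R : numDomainType) (T : Type) (S : set T) x : 0 <= (\1_S x : R) <= 1.
Proof. by rewrite indicE; case: (_ \in _); rewrite ?lexx ?ler01. Qed.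

Lemma sum_double (V : nmodType) (F : nat -> V) N :
  \sum_(j < N.*2) F j = \sum_(m < N) (F m.*2 + F m.*2.+1).
Proof.
elim: N => [|N IH]; first by rewrite !big_ord0.
by rewrite doubleS !big_ord_recr /= IH addrA.
Qed.

Lemma sum_le_shift (R : realDomainType) (a b : nat -> R) N :
  (forall k, (k < N)%N -> a k.+1 <= b k) -> 0 <= a N -> a 0%N <= 1 ->
  \sum_(k < N) a k <= \sum_(k < N) b k + 1.
Proof.
move=> ab aN0 a01.
have shift : \sum_(k < N) a k + a N = a 0%N + \sum_(k < N) a k.+1.
  transitivity (\sum_(k < N.+1) a k); first by rewrite big_ord_recr.
  by rewrite big_ord_recl.
have : \sum_(k < N) a k.+1 <= \sum_(k < N) b k by apply: ler_sum => k _; exact: ab.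
lra.
Qed.

Lemma even_or_odd k : (exists m, k = m.*2) \/ (exists m, k = m.*2.+1).
Proof.
elim: k => [|k [[m ->]|[m ->]]]; first by left; exists 0%N.
  by right; exists m.
by left; exists m.+1; rewrite doubleS.
Qed.

Module Nachbin.
Section nachbin.
Variables (R : realType) (X : topologicalType) (le : X -> X -> Prop).
Hypotheses (cX : compact [set: X]) (hX : hausdorff_space X).
Hypotheses (preX : is_preorder le) (cG : closed (graph le)).
Variables A B : set X.
Hypotheses (cA : closed A) (cB : closed B).
Hypotheses (upA : upper_set le A) (loB : lower_set le B) (AB0 : A `&` B = set0).

Definition interpolant (K W : set X) : set X * set X :=
  xget (set0, set0) [set VL | interpolates le K W VL.1 VL.2].

Lemma interpolantP K W :
  closed K -> open W -> lower_set le K -> lower_set le W -> K `<=` W ->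
  interpolates le K W (interpolant K W).1 (interpolant K W).2.
Proof.
move=> cK oW loK loW KW.
apply: (@xgetPex _ _ [set VL | interpolates le K W VL.1 VL.2]).
exact: lower_interpolation.
Qed.

(* [chain n k = (U n k, L n k)] for [k <= 2 ^ n] is an interleaved chain
   [B <= U n 0 <= L n 0 <= U n 1 <= ... <= U n (2 ^ n) = ~` A]; level [n.+1]
   keeps level [n] at even indices and interpolates at odd ones. *)
Fixpoint chain (n : nat) : nat -> set X * set X :=
  if n is n'.+1 then fun k =>
    if odd k then interpolant (chain n' k./2).2 (chain n' k./2.+1).1
    else chain n' k./2
  else fun k => if k == 0%N then interpolant B (~` A) else (~` A, ~` A).

Definition U n k := (chain n k).1.
Definition L n k := (chain n k).2.

Lemma chain_even n m : chain n.+1 m.*2 = chain n m.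
Proof. by rewrite /= odd_double half_double. Qed.

Lemma chain_odd n m : chain n.+1 m.*2.+1 = interpolant (L n m) (U n m.+1).
Proof. by rewrite /= odd_double /= uphalf_double. Qed.

Lemma chain0 : interpolates le B (~` A) (U 0 0) (L 0 0).
Proof.
apply: interpolantP cB (closed_openC cA) loB (lower_setC upA) _.
by move=> x Bx Ax; have : (A `&` B) x by []; rewrite AB0.
Qed.

Definition chain_spec n :=
  (forall k, (k <= 2 ^ n)%N ->
     [/\ open (U n k), lower_set le (U n k) & U n k `<=` ~` A]) /\
  (forall k, (k < 2 ^ n)%N ->
     [/\ closed (L n k), lower_set le (L n k),
         U n k `<=` L n k & L n k `<=` U n k.+1]).

Lemma chain_refine n m : chain_spec n -> (m < 2 ^ n)%N ->
  interpolates le (L n m) (U n m.+1) (U n.+1 m.*2.+1) (L n.+1 m.*2.+1).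
Proof.
move=> [hU hL] hm; rewrite /U /L chain_odd.
have [cL loL UL LU] := hL m hm; have [oU loU _] := hU m.+1 hm.
exact: interpolantP.
Qed.

Lemma chain_specP n : chain_spec n.
Proof.
elim: n => [|n IH].
  have [oV cL loV loL [_ VL LA]] := chain0.
  split=> -[|[|//]] //= _; split=> //; try exact: lower_setC.
    exact: subset_trans VL LA.
  exact: closed_openC.
have [hU hL] := IH.
split=> k; have [[m ->]|[m ->]] := even_or_odd k; rewrite expnS mul2n.
- by rewrite leq_double /U chain_even; exact: hU.
- rewrite ltn_double => hm.
  have [oV _ loV _ [_ VL LW]] := chain_refine IH hm.
  have [_ _ UA] := hU m.+1 hm.
  by split=> //; apply: subset_trans UA; apply: subset_trans LW.
- rewrite ltn_double => hm; have [_ _ _ _ [LV _ _]] := chain_refine IH hm.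
  by rewrite /L /U chain_even; have [? ? ? ?] := hL m hm.
- rewrite ltn_Sdouble => hm; have [_ cL' _ loL' [_ VL LW]] := chain_refine IH hm.
  by split=> //; rewrite /U -doubleS chain_even.
Qed.

Definition count n x : R := \sum_(k < 2 ^ n) \1_(~` U n k) x.

Definition approx n x := count n x / 2 ^+ n.

Lemma inv_pow2S n : (2 ^+ n)^-1 = 2 * (2 ^+ n.+1)^-1 :> R.
Proof. by rewrite exprS invfM mulrA mulfV ?mul1r. Qed.

Lemma inv_pow2_gt0 n : 0 < (2 ^+ n)^-1 :> R.
Proof. by rewrite invr_gt0 exprn_gt0. Qed.

Lemma approx01 n x : 0 <= approx n x <= 1.
Proof.
have ge0 : 0 <= count n x.
  by apply: sumr_ge0 => k _; case/andP: (indic01 R (~` U n k) x).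
have le_pow : count n x <= 2 ^+ n.
  apply: le_trans (_ : \sum_(k < 2 ^ n) (1 : R) <= _).
    by apply: ler_sum => k _; case/andP: (indic01 R (~` U n k) x).
  by rewrite sumr_const card_ord natrX.
by rewrite divr_ge0 ?ler_pdivrMr ?exprn_gt0 ?mul1r ?le_pow ?ge0.
Qed.

Lemma approx_isotone n : isotone le (fun a b : R => a <= b) (approx n).
Proof.
move=> x y xy; rewrite ler_pM2r ?inv_pow2_gt0 //; apply: ler_sum => k _.
have [hU _] := chain_specP n; have [_ loU _] := hU k (ltnW (ltn_ord k)).
by apply: indic_le => nUx Uy; apply/nUx/(loU _ _ xy).
Qed.

Lemma count_succ n x : count n.+1 x <= 2 * count n x <= count n.+1 x + 1.
Proof.
pose a k : R := \1_(~` U n k) x; pose b k : R := \1_(~` U n.+1 k.*2.+1) x.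
have -> : count n.+1 x = \sum_(k < 2 ^ n) a k + \sum_(k < 2 ^ n) b k.
  rewrite /count expnS mul2n (sum_double (fun j => \1_(~` U n.+1 j) x : R)).
  by rewrite -big_split; apply: eq_bigr => k _; rewrite /a /U chain_even.
have nested k : (k < 2 ^ n)%N ->
    U n k `<=` U n.+1 k.*2.+1 /\ U n.+1 k.*2.+1 `<=` U n k.+1.
  move=> hk; have [_ hL] := chain_specP n; have [_ _ UL _] := hL k hk.
  have [_ _ _ _ [LV VL LU]] := chain_refine (chain_specP n) hk.
  by split; [exact: subset_trans LV | exact: subset_trans LU].
have -> : count n x = \sum_(k < 2 ^ n) a k by [].
apply/andP; split.
  rewrite mulr_natl mulr2n lerD2l; apply: ler_sum => k _.
  by apply: indic_le => nV Ux; apply: nV; exact: (nested k (ltn_ord k)).1 _ Ux.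
rewrite mulr_natl mulr2n -addrA lerD2l; apply: sum_le_shift.
- by move=> k hk; apply: indic_le => nU Vx; apply: nU; exact: (nested k hk).2 _ Vx.
- by case/andP: (indic01 R (~` U n (2 ^ n)) x).
- by case/andP: (indic01 R (~` U n 0) x).
Qed.

Lemma approx_succ n x :
  approx n.+1 x <= approx n x <= approx n.+1 x + (2 ^+ n.+1)^-1.
Proof.
have /andP[h1 h2] := count_succ n x; have w0 := inv_pow2_gt0 n.+1.
by rewrite /approx (inv_pow2S n); apply/andP; split; nra.
Qed.

(* Near [x], a point [y] stays in every open [U n k] containing [x], and
   leaves [U n k] whenever [x] leaves [U n k.+1], since [U n k <= L n k]
   with [L n k] closed. *)
Lemma count_near n x :
  \forall y \near x, count n y <= count n x <= count n y + 1.
Proof.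
have [hU hL] := chain_specP n.
have near_mem : \forall y \near x, forall k : 'I_(2 ^ n),
    (U n k x -> U n k y) /\ (U n k y -> U n k.+1 x).
  apply: filter_forall => k.
  have [oU _ _] := hU k (ltnW (ltn_ord k)); have [cL _ UL LU] := hL k (ltn_ord k).
  have stay : \forall y \near x, U n k x -> U n k y.
    have [Ux|nUx] := pselect (U n k x); last by apply: nearW => y /nUx.
    by apply: filterS (open_nbhs_nbhs (conj oU Ux)) => y Uy _.
  have leave : \forall y \near x, U n k y -> U n k.+1 x.
    have [USx|nUSx] := pselect (U n k.+1 x); first by apply: nearW.
    have nLx : (~` L n k) x by move=> /LU.
    by apply: filterS (open_nbhs_nbhs (conj (closed_openC cL) nLx)) => y nLy /UL.
  by apply: filterS2 stay leave.
apply: filterS near_mem => y mem; apply/andP; split.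
  by apply: ler_sum => k _; apply: indic_le => nUy Ux; exact/nUy/(mem k).1.
apply: (@sum_le_shift _ (fun k => \1_(~` U n k) x) (fun k => \1_(~` U n k) y)).
- by move=> k hk; apply: indic_le => nUx Uy; exact/nUx/(mem (Ordinal hk)).2.
- by case/andP: (indic01 R (~` U n (2 ^ n)) x).
- by case/andP: (indic01 R (~` U n 0) x).
Qed.

Lemma approx_near n x :
  \forall y \near x, approx n y <= approx n x <= approx n y + (2 ^+ n)^-1.
Proof.
have w0 := inv_pow2_gt0 n.
apply: filterS (count_near n x) => y /andP[h1 h2].
by rewrite /approx; apply/andP; split; nra.
Qed.

Lemma approx_lower n k x :
  approx n x - (2 ^+ n)^-1 + (2 ^+ (n + k))^-1 <= approx (n + k) x.
Proof.
elim: k => [|k IH]; first by rewrite addn0 subrK.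
have /andP[_ h] := approx_succ (n + k) x; have := inv_pow2S (n + k).
by rewrite addnS; lra.
Qed.

Lemma approx_decr n k x : approx (n + k) x <= approx n x.
Proof.
elim: k => [|k IH]; first by rewrite addn0.
by rewrite addnS; apply: le_trans IH; case/andP: (approx_succ (n + k) x).
Qed.

Lemma approx_sub_le n m x : approx n x - (2 ^+ n)^-1 <= approx m x.
Proof.
have w0 := inv_pow2_gt0 n.
have [nm|/ltnW mn] := leqP n m.
  have := inv_pow2_gt0 m; have := approx_lower n (m - n) x.
  by rewrite subnKC //; lra.
by have := approx_decr m (n - m) x; rewrite subnKC //; lra.
Qed.

Definition limit x := inf (range (approx ^~ x)).

Lemma limit_le n x : limit x <= approx n x.
Proof.
apply: ge_inf; last by exists n.
by exists 0 => _ [m _ <-]; case/andP: (approx01 m x).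
Qed.

Lemma limit_ge n x : approx n x - (2 ^+ n)^-1 <= limit x.
Proof.
apply: lb_le_inf; first by exists (approx 0 x), 0%N.
by move=> _ [m _ <-]; exact: approx_sub_le.
Qed.

Lemma limit01 x : 0 <= limit x <= 1.
Proof.
apply/andP; split.
  apply: lb_le_inf; first by exists (approx 0 x), 0%N.
  by move=> _ [m _ <-]; case/andP: (approx01 m x).
by apply: le_trans (limit_le 0 x) _; case/andP: (approx01 0 x).
Qed.

Lemma limit_isotone : isotone le (fun a b : R => a <= b) limit.
Proof.
move=> x y xy; apply: lb_le_inf; first by exists (approx 0 y), 0%N.
move=> _ [n _ <-]; apply: le_trans (limit_le n x) _.
exact: approx_isotone.
Qed.

Lemma limit_continuous : continuous limit.
Proof.
move=> x; apply/cvgrPdist_le => e e0.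
have e2_gt0 : 0 < e / 2 by rewrite divr_gt0.
have [n _ /(_ n (leqnn n))] := near_infty_natSinv_expn_lt (PosNum e2_gt0).
rewrite mul1r /= => small.
apply: filterS (approx_near n x) => y /andP[h1 h2].
have := limit_le n x; have := limit_ge n x.
have := limit_le n y; have := limit_ge n y.
by move=> *; rewrite ler_norml; apply/andP; split; lra.
Qed.

Lemma approx_upper n x : A x -> approx n x = 1.
Proof.
move=> Ax; have [hU _] := chain_specP n.
rewrite /approx /count (eq_bigr (fun=> 1)) ?sumr_const ?card_ord ?natrX ?divff //.
move=> k _; rewrite indicE mem_set //.
by have [_ _ UA] := hU k (ltnW (ltn_ord k)); move=> /UA.
Qed.

Lemma separation : exists f : X -> R,
  [/\ cont01 f, isotone le (fun a b : R => a <= b) f,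
      (forall x, A x -> f x = 1) & (forall x, B x -> f x = 0)].
Proof.
exists limit; split.
- split; [exact: limit_continuous | exact: limit01].
- exact: limit_isotone.
- move=> x Ax; apply/eqP; rewrite eq_le (andP (limit01 x)).2 /=.
  apply: lb_le_inf; first by exists (approx 0 x), 0%N.
  by move=> _ [n _ <-]; rewrite approx_upper.
- move=> x Bx; apply/eqP; rewrite eq_le (andP (limit01 x)).1 andbT.
  apply: le_trans (limit_le 0 x) _.
  have [_ _ _ _ [BU _ _]] := chain0.
  by rewrite /approx /count big_ord1 indicE memNset ?mul0r // => /(_ (BU x Bx)).
Qed.

End nachbin.
End Nachbin.

Lemma compact_urysohn (R : realType) (K : topologicalType) (A B : set K) :
  compact [set: K] -> hausdorff_space K -> closed A -> closed B -> A `&` B = set0 ->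
  exists h : K -> R,
    [/\ cont01 h, (forall x, A x -> h x = 0) & (forall x, B x -> h x = 1)].
Proof.
move=> cK hK cA cB AB0.
have [h [hc hA hB hr]] :=
  @urysohn_ext_itv K R (compact_normal hK cK) A B 0 1 cA cB AB0 ltr01.
exists h; split.
- by split=> // x; have := hr (h x) (ex_intro2 _ _ x I erefl); rewrite /= in_itv.
- by move=> x Ax; apply: (hA (h x)); exists x.
- by move=> x Bx; apply: (hB (h x)); exists x.
Qed.

Lemma cont01_comp (R : realType) (T U : topologicalType) (c : T -> U) (h : U -> R) :
  continuous c -> cont01 h -> cont01 (h \o c).
Proof.
move=> cc [hc h01]; split=> [x|x]; last exact: h01.
exact: continuous_comp (cc x) (hc (c x)).
Qed.

Lemma closed_graph_le_comp (R : realType) (U : topologicalType) (g : U -> R) :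
  continuous g -> closed (graph (fun p q => g p <= g q)).
Proof.
move=> gc; have -> : graph (fun p q => g p <= g q) =
    (fun pq => g pq.2 - g pq.1) @^-1` [set r | 0 <= r].
  by apply/seteqP; split=> -[p q] /=; rewrite subr_ge0.
apply: preimage_closed; last exact: closed_ge.
move=> pq _; apply: continuousB.
  by apply: continuous_comp; [exact: cvg_snd | exact: gc].
by apply: continuous_comp; [exact: cvg_fst | exact: gc].
Qed.

Section stone_cech_lift.
Variables (R : realType) (E bE K : topologicalType) (beta : E -> bE) (c : E -> K).
Hypotheses (hbeta : stone_cech R beta) (cK : compact [set: K]).
Hypotheses (hK : hausdorff_space K) (cc : continuous c).

Let closed_set1 := accessible_closed_set1 (hausdorff_accessible hK).
Arguments closed_set1 : clear implicits.

(* [a] is the value at [p] of the lift of [c], as seen by the test functions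
   [h : K -> [0,1]]. *)
Definition lifts_to (p : bE) (a : K) :=
  forall h : K -> R, cont01 h -> forall g : bE -> R, continuous g ->
    (forall x, g (beta x) = h (c x)) -> g p = h a.

Lemma lifts_to_unique p a a' : lifts_to p a -> lifts_to p a' -> a = a'.
Proof.
move=> pa pa'; apply: contrapT => aa'.
have a_a'0 : [set a] `&` [set a'] = set0.
  by apply/seteqP; split=> // z [/= za za']; apply: aa'; rewrite -za -za'.
have [h [h01 h0 h1]] := compact_urysohn R cK hK (closed_set1 a)
  (closed_set1 a') a_a'0.
have [_ _ _ _ ext] := hbeta; have [g [[gc _] gext]] := ext _ (cont01_comp cc h01).
have := pa h h01 g gc gext; rewrite (pa' h h01 g gc gext) (h0 a) // (h1 a') //.
by move/eqP; rewrite oner_eq0.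
Qed.

(* [a] is a cluster point of the images under [c] of the traces on [E] of the
   neighbourhoods of [p]. *)
Lemma lifts_to_exists p : exists a, lifts_to p a.
Proof.
have [_ _ _ dense_beta _] := hbeta.
pose F := filter_from (nbhs p) (fun N => c @` (beta @^-1` N)).
have FF : Filter F.
  apply: filter_from_filter; first by exists setT; exact: filterT.
  move=> N1 N2 n1 n2; exists (N1 `&` N2); first exact: filterI.
  by move=> _ [x [h1 h2] <-]; split; exists x.
have PF : ProperFilter F.
  apply: filter_from_proper => // N; rewrite nbhsE => -[W [oW Wp] WN].
  have [z [Wz [x _ xz]]] := dense_beta W (ex_intro _ p Wp) oW.
  by exists (c x), x => //; apply: WN; rewrite /= xz.
have [a [_ cla]] := cK PF (@filterT _ F FF).
exists a => h [hc _] g gc gext; apply: contrapT => gph.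
pose d := `|g p - h a|.
have d2_gt0 : 0 < d / 2 by rewrite divr_gt0 // normr_gt0 subr_eq0; apply/eqP.
have near_p := cvgr_dist_lt _ _ (gc p) _ d2_gt0.
have near_a := cvgr_dist_lt _ _ (hc a) _ d2_gt0.
have Fp : F (c @` (beta @^-1` [set q | `|g p - g q| < d / 2])).
  by exists ([set q | `|g p - g q| < d / 2]); first exact: near_p.
have [_ [[x gx <-] hx]] := cla _ _ Fp (near_a _).
rewrite /= gext in gx; have := ler_distD (h (c x)) (g p) (h a).
by rewrite -/d (distrC (h (c x))); lra.
Qed.

Lemma stone_cech_lift : exists C : bE -> K,
  [/\ continuous C, forall x, C (beta x) = c x & forall p, lifts_to p (C p)].
Proof.
pose C p := projT1 (cid (lifts_to_exists p)).
have CP p : lifts_to p (C p) := projT2 (cid (lifts_to_exists p)).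
have [_ _ _ _ ext] := hbeta.
exists C; split=> //; last first.
  by move=> x; apply: lifts_to_unique (CP (beta x)) _ => h _ g _ ->.
move=> p V; rewrite nbhsE => -[W [oW WCp] WV].
have Cp_W0 : [set C p] `&` ~` W = set0.
  by apply/seteqP; split=> // z [/= ->].
have [h [h01 h0 h1]] := compact_urysohn R cK hK (closed_set1 (C p))
  (open_closedC oW) Cp_W0.
have [g [[gc _] gext]] := ext _ (cont01_comp cc h01).
have gE q : g q = h (C q) := CP q h h01 g gc gext.
have gp_lt : g p < 1 / 2 by rewrite gE h0.
have near_p := cvgr_lt _ (gc p) _ gp_lt.
change (nbhs p (C @^-1` V)); apply: filterS (near_p _) => q /= gq; apply: WV.
by apply: contrapT => nWCq; move: gq; rewrite gE h1 //; lra.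
Qed.

End stone_cech_lift.

Section le_beta.
Variables (R : realType) (E bE : topologicalType) (le : E -> E -> Prop).
Variable beta : E -> bE.
Local Notation le_b := (le_beta R le beta).

Lemma le_beta_preorder : is_preorder le_b.
Proof.
split=> [p f _ g _ _ | p q r pq qr f hf g gc gext]; first exact: lexx.
exact: le_trans (pq f hf g gc gext) (qr f hf g gc gext).
Qed.

Lemma le_beta_isotone : isotone le le_b beta.
Proof. by move=> x y xy f [_ isof] g _ gext; rewrite !gext; exact: isof. Qed.

Lemma closed_graph_le_beta : closed (graph le_b).
Proof.
pose D := [set g : bE -> R | continuous g /\
  exists2 f, cont_isotone01 le f & forall x, g (beta x) = f x].
have -> : graph le_b = \bigcap_(g in D) graph (fun p q => g p <= g q).
  apply/seteqP; split=> [[p q] pq g [gc [f hf gext]] | [p q] pq f hf g gc gext].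
    exact: pq f hf g gc gext.
  by apply: (pq g); split=> //; exists f.
by apply: closed_bigI => g [gc _]; exact: closed_graph_le_comp.
Qed.

Hypothesis hbeta : stone_cech R beta.

Lemma le_beta_extension f : cont_isotone01 le f ->
  exists g : bE -> R, [/\ cont01 g, forall x, g (beta x) = f x &
                          isotone le_b (fun a b : R => a <= b) g].
Proof.
move=> hf; have [_ _ _ _ ext] := hbeta; have [g [g01 gext]] := ext f hf.1.
by exists g; split=> // p q pq; exact: pq f hf g g01.1 gext.
Qed.

Lemma le_beta_reflect x y :
  ((forall f : E -> R, cont_isotone01 le f -> f x <= f y) -> le x y) ->
  le_b (beta x) (beta y) -> le x y.
Proof.
move=> hG xy; apply: hG => f hf; have [g [[gc _] gext _]] := le_beta_extension hf.
by have := xy f hf g gc gext; rewrite !gext.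
Qed.

Lemma le_beta_dominates (cE : topologicalType) (lec : cE -> cE -> Prop)
    (c : E -> cE) :
  hausdorff_T2_preorder_compactification le lec c -> dominates lec le_b c beta.
Proof.
move=> [[[lerefl letrans] ccE [[_ cc _] isoc _] _] hcE cGc].
have [C [Cc Cbeta Clift]] := stone_cech_lift hbeta ccE hcE cc.
exists C; split=> // p q pq; apply: contrapT => nCpq.
have upA : upper_set lec [set z | lec (C p) z].
  by move=> x y xy px; exact: letrans px xy.
have loB : lower_set lec [set z | lec z (C q)].
  by move=> x y xy yq; exact: letrans xy yq.
have AB0 : [set z | lec (C p) z] `&` [set z | lec z (C q)] = set0.
  by apply/seteqP; split=> // z [/= pz zq]; apply: nCpq; exact: letrans pz zq.
have [h [h01 hiso h1 h0]] := Nachbin.separation R ccE hcE (conj lerefl letrans) cGc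
  (closed_upper_principal cGc) (closed_lower_principal cGc) upA loB AB0.
have hcF : cont_isotone01 le (h \o c).
  by split; [exact: cont01_comp | move=> x y /isoc; exact: hiso].
have [g [[gc _] gext _]] := le_beta_extension hcF.
have := pq _ hcF g gc gext.
by rewrite (Clift p h h01 g gc gext) (Clift q h h01 g gc gext) h1 ?h0 //= ?ler10.
Qed.

End le_beta.

Theorem mainTheorem4 (R : realType) (E : topologicalType) (le : E -> E -> Prop)
  (hT2 : T2_preordered le) (hTy : tychonoff_space R E)
  (hG : forall x y : E, le x y <->
          (forall f : E -> R, cont_isotone01 le f -> f x <= f y))
  (bE : topologicalType) (beta : E -> bE) (hbeta : stone_cech R beta) :
  [/\ hausdorff_T2_preorder_compactification le (le_beta R le beta) beta,
      (forall (cE : topologicalType) (lec : cE -> cE -> Prop) (c : E -> cE),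
         hausdorff_T2_preorder_compactification le lec c ->
         dominates lec (le_beta R le beta) c beta) &
      (forall f : E -> R, cont_isotone01 le f ->
         exists g : bE -> R, [/\ cont01 g, (forall x, g (beta x) = f x) &
                                 isotone (le_beta R le beta) (fun a b : R => a <= b) g])].
Proof.
have [cbE hbE embb densb _] := hbeta.
have embedding : preorder_embedding le (le_beta R le beta) beta.
  split=> //; first exact: le_beta_isotone.
  by move=> x y; apply: le_beta_reflect => //; exact: (hG x y).2.
split.
- split; last exact: closed_graph_le_beta.
  + by split=> //; exact: le_beta_preorder.
  + exact: hbE.
- by move=> cE lec c; exact: le_beta_dominates.
- by move=> f; exact: le_beta_extension.
Qed.
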